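(* Let $\mathcal{M}\subset\mathbb{R}^n$ be a locally symmetric $C^2$ submanifold with characteristic permutation $\sigma_*$, and let $\sigma\in\Sigma^n$ be a permutation each of whose cycles is contained either in $F:=\mathbb{N}_n\setminus\mathrm{supp}(\sigma_* )$ or in $\mathrm{supp}(\sigma_* )$. Let $\sigma^F$ (resp. $\sigma^M$) be the restriction of $\sigma$ to $F$ (resp. to $\mathrm{supp}(\sigma_* )$), and $\sigma_*^M$ the restriction of $\sigma_*$ to $\mathrm{supp}(\sigma_* )$. Then: $\sigma\sim\sigma_*$ iff $\sigma^F$ is the identity of $F$ and $P(\sigma^M)=P(\sigma_*^M)$; and $\sigma\prec\!\sim\sigma_*$ iff $\sigma^F$ is not the identity of $F$ and $P(\sigma^M)=P(\sigma_*^M)$.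
   Context: $\Sigma^n$ permutations of $\mathbb{N}_n$ acting by $(\sigma x)_i=x_{\sigma^{-1}(i)}$; $\mathrm{supp}(\sigma)$ the set of non-fixed indices; $P(\sigma)$ the partition into orbits of $\sigma$ (also used for permutations of a subset); $P(x)$ partition by equal coordinates; $\Delta(\sigma)=\{x:P(x)=P(\sigma)\}$. $\sigma\sim\sigma'$ means $P(\sigma)=P(\sigma')$; $\sigma\prec\sigma'$ means $P(\sigma')$ refines $P(\sigma)$ (every set of $P(\sigma)$ is a union of sets of $P(\sigma')$) and $P(\sigma)\ne P(\sigma')$. $\sigma\prec\!\sim\sigma'$ means $\sigma\prec\sigma'$ and every set of $P(\sigma)$ that is not a set of $P(\sigma')$ is a union of singleton sets of $P(\sigma')$. $\mathbb{R}^n_\ge=\{x:x_1\ge\cdots\ge x_n\}$; $B$ open ball. A set $S$ is locally symmetric if $S\cap\mathbb{R}^n_\ge\ne\emptyset$ and each $x\in S$ has $\delta>0$ with $\sigma(S\cap B(x,\delta))=S\cap B(x,\delta)$ for all $y\in S\cap B(x,\delta)$, all $\sigma$ with $\sigma y=y$; a locally symmetric $C^2$ submanifold is a connected $C^2$ submanifold without boundary which is locally symmetric. A characteristic permutation is a $\sigma_*$ with $\mathcal{M}\cap B(y,\rho)\subset\Delta(\sigma_* )$ for some $y\in\mathcal{M}$, $\rho>0$. *)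

From HB Require Import structures.
From mathcomp Require Import all_boot all_order all_algebra all_fingroup.
From mathcomp Require Import all_classical all_reals all_analysis.
Set Implicit Arguments. Unset Strict Implicit. Unset Printing Implicit Defensive.
Import Order.TTheory GRing.Theory Num.Theory.
Import numFieldNormedType.Exports.
Local Open Scope ring_scope.

Section Defs.
Variables (R : realType) (n : nat).
Local Notation V := 'rV[R]_n.

Definition supp (s : {perm 'I_n}) : {set 'I_n} := [set i | s i != i].

Definition Pperm (s : {perm 'I_n}) : {set {set 'I_n}} := porbits s.

Definition Pperm_on (s : {perm 'I_n}) (A : {set 'I_n}) : {set {set 'I_n}} :=
  [set porbit s i | i in A].

Definition Pvec (x : V) : {set {set 'I_n}} :=
  [set [set j | x 0 j == x 0 i] | i : 'I_n].

Definition Delta (s : {perm 'I_n}) : set V := [set x | Pvec x = Pperm s].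

(* "Q refines P": every set of P is a union of sets of Q *)
Definition refines (P Q : {set {set 'I_n}}) : Prop :=
  forall B, B \in P -> exists S : {set {set 'I_n}}, S \subset Q /\ B = finset.cover S.

Definition psim (s s' : {perm 'I_n}) : Prop := Pperm s = Pperm s'.

Definition pprec (s s' : {perm 'I_n}) : Prop :=
  refines (Pperm s) (Pperm s') /\ Pperm s <> Pperm s'.

Definition pprecsim (s s' : {perm 'I_n}) : Prop :=
  pprec s s' /\
  forall B, B \in Pperm s -> B \notin Pperm s' ->
    exists S : {set {set 'I_n}}, S \subset Pperm s' /\
      (forall C, C \in S -> #|C| = 1%N) /\ B = finset.cover S.

Local Open Scope classical_set_scope.

Definition pact (s : {perm 'I_n}) (x : V) : V := \row_i x 0 ((s^-1)%g i).

Definition eball (x : V) (r : R) : set V :=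
  [set y | Num.sqrt (\sum_i (x 0 i - y 0 i) ^+ 2) < r].

Definition Rge_cone : set V := [set x | forall i j : 'I_n, (i <= j)%N -> x 0 j <= x 0 i].

Definition locally_symmetric (S : set V) : Prop :=
  S `&` Rge_cone !=set0 /\
  forall x, S x -> exists2 d : R, 0 < d &
    forall y (s : {perm 'I_n}), (S `&` eball x d) y -> pact s y = y ->
      pact s @` (S `&` eball x d) = S `&` eball x d.

Definition C2_on (m : nat) (U : set V) (f : V -> 'rV[R]_m) : Prop :=
  forall x, U x ->
    {for x, continuous f} /\
    forall u v : V,
      derivable f x u /\ {for x, continuous ('D_u f)} /\
      derivable ('D_u f) x v /\ {for x, continuous ('D_v ('D_u f))}.

(* connected C^2 embedded submanifold without boundary: locally the zero set
   of a C^2 submersion *)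
Definition C2_submanifold (M : set V) : Prop :=
  connected M /\
  forall x, M x -> exists (d : nat) (U : set V) (phi : V -> 'rV[R]_d),
    [/\ open U, U x, C2_on U phi,
        (forall y, U y -> M y -> forall w : 'rV[R]_d, exists v : V, 'D_v phi y = w)
      & U `&` M = U `&` phi @^-1` [set 0]].

Definition locally_symmetric_C2_submanifold (M : set V) : Prop :=
  C2_submanifold M /\ locally_symmetric M.

Definition characteristic_perm (M : set V) (s : {perm 'I_n}) : Prop :=
  exists y, M y /\ exists2 rho : R, 0 < rho & M `&` eball y rho `<=` Delta s.

End Defs.

From HB Require Import structures.
From mathcomp Require Import all_boot all_order all_algebra all_fingroup.
From mathcomp Require Import all_classical all_reals all_analysis.
Import Order.TTheory GRing.Theory Num.Theory.
Set Implicit Arguments.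

(* Off F = ~: supp sstar every cycle of sstar is a singleton, so
   P(s) = P(sstar) exactly when s fixes F pointwise and has the cycles of sstar
   on supp sstar.  If s has the cycles of sstar on supp sstar but moves a point
   of F, then P(s) <> P(sstar) while every cycle of s inside F is a union of
   singleton cycles of sstar, i.e. s <~ sstar.  Conversely a cycle of s through
   a point of supp sstar is never a union of singleton cycles of sstar, so
   s <~ sstar forces s and sstar to have the same cycles on supp sstar. *)

Section PermOrbits.
Variable T : finType.
Implicit Types (s t : {perm T}) (x : T).

Lemma porbit_set1P s x : reflect (porbit s x = [set x]) (s x == x).
Proof.
apply: (iffP eqP) => [sx | sx1].
  apply/setP=> y; rewrite inE; apply/porbitP/eqP => [[i ->] | ->]; last first.
    by exists 0%N; rewrite expg0 perm1.
  elim: i => [|i IHi]; first by rewrite expg0 perm1.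
  by rewrite expgSr permM IHi.
have : s x \in porbit s x by rewrite -{1}(expg1 s) mem_porbit.
by rewrite sx1 inE => /eqP.
Qed.

Lemma porbits_memE t (B : {set T}) x : B \in porbits t -> x \in B -> B = porbit t x.
Proof.
case/imsetP=> y _ -> xB; apply/esym/eqP.
by rewrite eq_porbit_mem.
Qed.

Lemma eq_imset_porbitP s t (A : {pred T}) :
  porbit s @: A = porbit t @: A <-> {in A, porbit s =1 porbit t}.
Proof.
split=> [eqst x xA | eqst]; last exact: eq_in_imset.
have : porbit s x \in porbit t @: A by rewrite -eqst imset_f.
case/imsetP=> y _ e; rewrite e; apply/esym/eqP.
by rewrite eq_porbit_mem -e porbit_id.
Qed.

End PermOrbits.

Section Support.
Variable n : nat.
Implicit Types (s t : {perm 'I_n}).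

Lemma notin_supp t i : (i \in ~: supp t) = (t i == i).
Proof. by rewrite !inE negbK. Qed.

Lemma porbits_eq_supp s t :
  porbits s = porbits t <->
  {in ~: supp t, forall i, s i = i} /\ {in supp t, porbit s =1 porbit t}.
Proof.
rewrite eq_imset_porbitP; split=> [eqst | [fixF eq_supp] x _].
  split=> [i | x _]; last exact: eqst.
  rewrite notin_supp => /porbit_set1P ti.
  by apply/eqP/porbit_set1P; rewrite eqst.
have [xA | xF] := boolP (x \in supp t); first exact: eq_supp.
have tx : t x == x by rewrite -notin_supp inE.
have sx : s x == x by rewrite fixF // inE.
by rewrite (porbit_set1P _ _ sx) (porbit_set1P _ _ tx).
Qed.

Lemma cover_fixed_points t (B : {set 'I_n}) :
  B \subset ~: supp t ->
  exists S : {set {set 'I_n}}, S \subset porbits t /\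
    (forall C, C \in S -> #|C| = 1%N) /\ B = finset.cover S.
Proof.
move=> BF; exists [set [set j] | j in B]; split; [|split].
- apply/fintype.subsetP=> _ /imsetP[j jB ->].
  have /porbit_set1P <- : t j == j by rewrite -notin_supp (fintype.subsetP BF).
  exact: imset_f.
- by move=> _ /imsetP[j _ ->]; rewrite cards1.
- rewrite cover_imset; apply/setP=> x; apply/idP/bigcupP => [xB | [j jB]].
    by exists x; rewrite ?inE.
  by rewrite inE => /eqP ->.
Qed.

Lemma fixed_of_cover_singletons t (S : {set {set 'I_n}}) i :
  S \subset porbits t -> (forall C, C \in S -> #|C| = 1%N) ->
  i \in finset.cover S -> t i = i.
Proof.
move=> St S1 /bigcupP[C CS iC].
have /cards1P[x Cx] : #|C| == 1%N by rewrite S1.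
have Ct : C = porbit t i := porbits_memE (fintype.subsetP St C CS) iC.
move: iC; rewrite Cx inE => /eqP ix; subst x.
by apply/eqP/porbit_set1P; rewrite -Ct.
Qed.

Lemma pprecsim_eq_on_supp s t :
  pprecsim s t -> {in supp t, porbit s =1 porbit t}.
Proof.
move=> [_ cover1] i iA.
have orb_s : porbit s i \in porbits s by apply: imset_f.
have [orb_t | orb_nt] := boolP (porbit s i \in porbits t).
  exact: porbits_memE orb_t (porbit_id s i).
have [S [St [S1 covS]]] := cover1 _ orb_s orb_nt.
have : t i = i by apply: fixed_of_cover_singletons St S1 _; rewrite -covS porbit_id.
by move/eqP; rewrite -notin_supp inE iA.
Qed.

Lemma pprecsim_moves_off_supp s t :
  pprecsim s t -> ~ {in ~: supp t, forall i, s i = i}.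
Proof.
move=> st fixF; have [[_ neq] _] := st; apply: neq.
by apply/porbits_eq_supp; split; last exact: pprecsim_eq_on_supp.
Qed.

Section CyclesSplit.
Variables s t : {perm 'I_n}.
Hypothesis cycles_split : forall C, C \in porbits s ->
  C \subset ~: supp t \/ C \subset supp t.

Lemma porbit_off_supp j : j \in ~: supp t -> porbit s j \subset ~: supp t.
Proof.
move=> jF; have orb_s : porbit s j \in porbits s by apply: imset_f.
have [// | orb_supp] := cycles_split orb_s.
by move: jF; rewrite inE (fintype.subsetP orb_supp _ (porbit_id s j)).
Qed.

Hypothesis eq_supp : {in supp t, porbit s =1 porbit t}.

Lemma porbit_in_porbits_or_off_supp j :
  porbit s j \in porbits t \/ porbit s j \subset ~: supp t.
Proof.
have [jA | jF] := boolP (j \in supp t).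
  by left; rewrite eq_supp // imset_f.
by right; apply: porbit_off_supp; rewrite inE.
Qed.

Lemma pprecsim_of_eq_on_supp :
  ~ {in ~: supp t, forall i, s i = i} -> pprecsim s t.
Proof.
move=> moves.
have [i iF si] : exists2 i, i \in ~: supp t & s i != i.
  apply: contrapT => nex; apply: moves => i iF; apply/eqP.
  by apply: contrapT => si; apply: nex; exists i => //; apply/negP.
split; [split|].
- move=> _ /imsetP[j _ ->].
  have [orb_t | orb_F] := porbit_in_porbits_or_off_supp j.
    by exists [set porbit s j]; rewrite finset.sub1set cover1.
  by have [S [St [_ covS]]] := cover_fixed_points orb_F; exists S.
- move/porbits_eq_supp => [fixF _].
  by move: si; rewrite fixF ?eqxx.
- move=> _ /imsetP[j _ ->] orb_nt.
  have [orb_t | orb_F] := porbit_in_porbits_or_off_supp j.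
    by rewrite orb_t in orb_nt.
  exact: cover_fixed_points orb_F.
Qed.

End CyclesSplit.

End Support.

Local Open Scope classical_set_scope.
Local Open Scope ring_scope.

Theorem proposition3p31 (R : realType) (n : nat) (M : set 'rV[R]_n)
    (sstar s : {perm 'I_n}) :
  locally_symmetric_C2_submanifold M ->
  characteristic_perm M sstar ->
  (forall C, C \in porbits s ->
     C \subset ~: supp sstar \/ C \subset supp sstar) ->
  (psim s sstar <->
     (forall i, i \in ~: supp sstar -> s i = i) /\
     Pperm_on s (supp sstar) = Pperm_on sstar (supp sstar)) /\
  (pprecsim s sstar <->
     ~ (forall i, i \in ~: supp sstar -> s i = i) /\
     Pperm_on s (supp sstar) = Pperm_on sstar (supp sstar)).
Proof.
move=> _ _ cycles_split; rewrite /Pperm_on eq_imset_porbitP.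
split; first exact: porbits_eq_supp.
split=> [st | [moves eq_supp]].
  by split; [exact: pprecsim_moves_off_supp | exact: pprecsim_eq_on_supp].
exact: pprecsim_of_eq_on_supp cycles_split eq_supp moves.
Qed.
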